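(* For each $t\ge 0$, the set of simplices of $\mathrm{VR}_t(\mathcal X,d_\theta)$ that meet both $\mathcal C$ and $\mathcal Y^\circ$ is exactly \[ \bigcup_{u,v\ge 0,\ \|(u,v)\|_{\ell^p}\le t}\Bigl(\mathrm{VR}_t(\mathcal C^{\le u})\star \mathrm{VR}_t(\mathcal Y^{\le v})\Bigr). \] In particular, when $p=\infty$, \[ \mathrm{VR}_t(\mathcal X,d_\theta)=\mathrm{VR}_t(\mathcal C,\beta)\cup \mathrm{VR}_t(\mathcal Y^\circ,d_{\mathrm{reg}})\cup\Bigl(\mathrm{VR}_t(\mathcal C^{\le t})\star \mathrm{VR}_t(\mathcal Y^{\le t})\Bigr). \]
   Context: Let $A$ be a unital $C^*$-algebra, $H$ a Hilbert space, $\mathcal X=\mathrm{CB}(A,B(H))$, $\mathcal C=\mathrm{CP}(A,B(H))$ with Bures distance $\beta$. Fix $\theta\in\mathcal C$, $\lambda>0$, $\alpha\in(0,1]$, $p\in[1,\infty]$, and let $d_\theta=\beta^{BK}_{\theta,\lambda,p,\alpha}$ be the Bures--Kuratowski metric. Let $\mathcal Y=(\mathcal X\setminus\mathcal C)\sqcup\{\ast\}$ with metric $d_{\mathrm{reg}}$ ($=\lambda\delta_{\mathrm{reg}}^\alpha$ on non-CP pairs and $\lambda\delta_{\mathrm{reg}}(\cdot,0)^\alpha$ to $\ast$, $\delta_{\mathrm{reg}}$ the regular-representation metric), $\mathcal Y^\circ=\mathcal Y\setminus\{\ast\}$. Then $d_\theta=\beta$ on $\mathcal C$, $d_\theta=d_{\mathrm{reg}}$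 on $\mathcal Y^\circ$, and $d_\theta(x,y)=\|(r_{\mathcal C}(x),r_{\mathcal Y}(y))\|_{\ell^p}$ for $x\in\mathcal C$, $y\in\mathcal Y$, with $r_{\mathcal C}(x)=\beta(x,\theta)$, $r_{\mathcal Y}(y)=d_{\mathrm{reg}}(y,\ast)$. $\mathrm{VR}_t(Z,d)$ is the Vietoris--Rips complex (finite subsets of diameter $\le t$). $\mathcal C^{\le u}=\{x\in\mathcal C: r_{\mathcal C}(x)\le u\}$, $\mathcal Y^{\le v}=\{y\in\mathcal Y^\circ: r_{\mathcal Y}(y)\le v\}$; $\mathrm{VR}_t(\mathcal C^{\le u})$ and $\mathrm{VR}_t(\mathcal Y^{\le v})$ are the induced subcomplexes of $\mathrm{VR}_t(\mathcal C,\beta)$ and $\mathrm{VR}_t(\mathcal Y^\circ,d_{\mathrm{reg}})$ on these vertex sets. For complexes $K,L$ on disjoint vertex sets, $K\star L=\{\sigma\cup\tau:\sigma\in K,\tau\in L,\sigma\ne\varnothing,\tau\neq\varnothing\}$. *)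

From HB Require Import structures.
From mathcomp Require Import all_boot all_order all_algebra.
From mathcomp Require Import all_classical all_reals all_analysis.
Set Implicit Arguments. Unset Strict Implicit. Unset Printing Implicit Defensive.
Import Order.TTheory GRing.Theory Num.Theory.
Local Open Scope classical_set_scope.
Local Open Scope ring_scope.

Section Defs.
Context {R : realType} {X : Type}.

Definition lp_norm (p : \bar R) (a b : R) : R :=
  match p with
  | EFin q => (a `^ q + b `^ q) `^ q^-1
  | +oo%E => Num.max a b
  | -oo%E => 0
  end.

Definition metric_on {T : Type} (S : set T) (d : T -> T -> R) : Prop :=
  [/\ forall x y, S x -> S y -> 0 <= d x y,
      forall x y, S x -> S y -> (d x y = 0 <-> x = y),
      forall x y, S x -> S y -> d x y = d y x &
      forall x y z, S x -> S y -> S z -> d x z <= d x y + d y z].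

(* Points of Y = (X \ C) ⊔ {*}, encoded in option X with None = * *)
Definition Yset (C : set X) : set (option X) :=
  fun o => match o with Some x => ~ C x | None => True end.

Definition dYo (dreg : option X -> option X -> R) (x y : X) : R :=
  dreg (Some x) (Some y).

Definition dtheta (C : set X) (beta : X -> X -> R)
  (dreg : option X -> option X -> R) (theta : X) (p : \bar R) (x y : X) : R :=
  match `[< C x >], `[< C y >] with
  | true, true => beta x y
  | false, false => dreg (Some x) (Some y)
  | true, false => lp_norm p (beta x theta) (dreg (Some y) None)
  | false, true => lp_norm p (beta y theta) (dreg (Some x) None)
  end.

Definition VR (t : R) (Z : set X) (d : X -> X -> R) : set (set X) :=
  [set s | [/\ finite_set s, s !=set0, s `<=` Z &
             forall x y, s x -> s y -> d x y <= t]].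

Definition Cle (C : set X) (beta : X -> X -> R) (theta : X) (u : R) : set X :=
  [set x | C x /\ beta x theta <= u].
Definition Yle (C : set X) (dreg : option X -> option X -> R) (v : R) : set X :=
  [set y | ~ C y /\ dreg (Some y) None <= v].

Definition join (K L : set (set X)) : set (set X) :=
  [set s | exists a b, [/\ K a, L b, a !=set0, b !=set0 & s = a `|` b]].

End Defs.

From HB Require Import structures.
From mathcomp Require Import all_boot all_order all_algebra.
From mathcomp Require Import all_classical all_reals all_analysis.
From mathcomp Require Import finmap.

Set Implicit Arguments.
Unset Strict Implicit.
Unset Printing Implicit Defensive.
Import Order.TTheory GRing.Theory Num.Theory.
Local Open Scope classical_set_scope.
Local Open Scope ring_scope.

(* A simplex s meeting both C and Y° splits as (s ∩ C) ∪ (s ∩ Y°).  Its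
   cross distances are ||(r_C x, r_Y y)||_p, and the largest one is attained
   at the maximisers x0 of r_C on s ∩ C and y0 of r_Y on s ∩ Y°; so s lies
   in the join indexed by (u, v) = (r_C x0, r_Y y0).  Conversely, in a join
   indexed by (u, v) every cross distance is at most ||(u, v)||_p <= t by
   monotonicity of the l^p norm.  For p = +oo the constraint max(u, v) <= t
   just means u, v <= t, and the joins are monotone in (u, v). *)

Lemma finite_set_argmax {d} {T : Type} {U : orderType d} (A : set T) (f : T -> U) :
  finite_set A -> A !=set0 -> exists2 x, A x & forall y, A y -> (f y <= f x)%O.
Proof.
move=> /(finite_image f)/finite_fsetP[F fAE] [a Aa].
have inF y : A y -> f y \in F.
  by move=> Ay; suff : [set` F] (f y) by []; rewrite -fAE; exists y.
have [/= m _ m_max] := @arg_maxP _ _ _ [` inF a Aa]%fset xpredT val isT.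
have : (f @` A) (val m) by rewrite fAE; exact: valP.
case=> x Ax fxE; exists x => // y Ay; rewrite fxE.
exact: (m_max [` inF y Ay]%fset).
Qed.

Section LpNorm.
Context {R : realType}.

Lemma ler_lp_norm (p : \bar R) (a b a' b' : R) : (1%:E <= p)%E ->
  0 <= a -> 0 <= b -> a <= a' -> b <= b' -> lp_norm p a b <= lp_norm p a' b'.
Proof.
case: p => [q||] //= + a0 b0 aa' bb'; last by rewrite ge_max !le_max aa' bb' orbT.
rewrite lee_fin => q1; have q0 : 0 <= q by apply: le_trans q1.
have a'0 : 0 <= a' by apply: le_trans aa'.
have b'0 : 0 <= b' by apply: le_trans bb'.
apply: ge0_ler_powR; rewrite ?invr_ge0 ?nnegrE ?addr_ge0 ?powR_ge0 //.
by apply: lerD; apply: ge0_ler_powR.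
Qed.

End LpNorm.

Section VietorisRips.
Context {R : realType} {X : Type}.
Implicit Types (t : R) (Z : set X) (d : X -> X -> R) (s a b : set X).

Lemma VR_eq_on t Z Z' d d' s : VR t Z d s -> s `<=` Z' ->
  (forall x y, s x -> s y -> d' x y = d x y) -> VR t Z' d' s.
Proof. by move=> [fs s0 _ ds] sZ' dd'; split => // x y sx sy; rewrite dd' //; apply: ds. Qed.

Lemma VRS t Z Z' d : Z `<=` Z' -> VR t Z d `<=` VR t Z' d.
Proof. by move=> ZZ' s [fs s0 sZ ds]; split => //; apply: subset_trans ZZ'. Qed.

Lemma VR_face t Z d s a : VR t Z d s -> a `<=` s -> a !=set0 -> VR t Z d a.
Proof.
move=> [fs _ sZ ds] a_s a0; split => //; first exact: sub_finite_set fs.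
- exact: subset_trans sZ.
- by move=> x y ax ay; apply: ds; apply: a_s.
Qed.

Lemma VR_setU t Z d a b : VR t Z d a -> VR t Z d b ->
  (forall x y, a x -> b y -> d x y <= t /\ d y x <= t) -> VR t Z d (a `|` b).
Proof.
move=> [fa a0 aZ da] [fb _ bZ db] dab; split.
- by rewrite finite_setU.
- by case: a0 => x ax; exists x; left.
- by move=> x [/aZ|/bZ].
- move=> x y [ax|bx] [ay|b_y]; [exact: da|exact: (dab x y ax b_y).1|
                                exact: (dab y x ay bx).2|exact: db].
Qed.

Lemma joinSS (K K' L L' : set (set X)) :
  K `<=` K' -> L `<=` L' -> join K L `<=` join K' L'.
Proof. by move=> KK' LL' s [a [b [Ka Lb a0 b0 ->]]]; exists a, b; split; auto. Qed.

Lemma bigcup_join_max_norm t (K L : R -> set (set X)) : 0 <= t ->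
  (forall u v, u <= v -> K u `<=` K v) -> (forall u v, u <= v -> L u `<=` L v) ->
  \bigcup_(uv in [set uv : R * R | [/\ 0 <= uv.1, 0 <= uv.2 &
                                       lp_norm +oo%E uv.1 uv.2 <= t]])
     join (K uv.1) (L uv.2)
  = join (K t) (L t).
Proof.
move=> t0 Kle Lle; apply/seteqP; split=> [s [[u v] [_ _]]|s Ks].
  by rewrite /= ge_max => /andP[ut vt]; apply: joinSS; [exact: Kle|exact: Lle].
by exists (t, t) => //=; rewrite maxxx.
Qed.

End VietorisRips.

Section BuresKuratowski.
Context {R : realType} {X : Type}.
Variables (C : set X) (beta : X -> X -> R) (dreg : option X -> option X -> R)
  (theta : X) (p : \bar R).
Local Notation dth := (dtheta C beta dreg theta p).
Implicit Types (t u v : R) (s a b : set X).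

Lemma dtheta_CC x y : C x -> C y -> dth x y = beta x y.
Proof. by move=> Cx Cy; rewrite /dtheta !asboolT. Qed.

Lemma dtheta_NN x y : ~ C x -> ~ C y -> dth x y = dYo dreg x y.
Proof. by move=> Cx Cy; rewrite /dtheta !asboolF. Qed.

Lemma dtheta_CN x y : C x -> ~ C y ->
  dth x y = lp_norm p (beta x theta) (dreg (Some y) None).
Proof. by move=> Cx Cy; rewrite /dtheta asboolT // asboolF. Qed.

Lemma dtheta_NC x y : ~ C x -> C y ->
  dth x y = lp_norm p (beta y theta) (dreg (Some x) None).
Proof. by move=> Cx Cy; rewrite /dtheta asboolF // asboolT. Qed.

Lemma Cle_subset u u' : u <= u' -> Cle C beta theta u `<=` Cle C beta theta u'.
Proof. by move=> uu' x [Cx xu]; split => //; apply: le_trans uu'. Qed.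

Lemma Yle_subset v v' : v <= v' -> Yle C dreg v `<=` Yle C dreg v'.
Proof. by move=> vv' y [Cy yv]; split => //; apply: le_trans vv'. Qed.

Definition mixed_simplices t : set (set X) :=
  [set s | VR t setT dth s /\ (s `&` C !=set0) /\ (s `&` ~` C !=set0)].

Lemma VR_dthetaE t : VR t setT dth
  = VR t C beta `|` VR t (~` C) (dYo dreg) `|` mixed_simplices t.
Proof.
apply/seteqP; split=> [s Vs|s [[VCs|VYs]|[]//]].
- have [sC|no_sC] := pselect (s `&` C !=set0); last first.
    have sY : s `<=` ~` C by move=> x sx Cx; apply: no_sC; exists x.
    by left; right; apply: (VR_eq_on Vs) => // x y /sY Cx /sY Cy; rewrite dtheta_NN.
  have [sY|no_sY] := pselect (s `&` ~` C !=set0); first by right.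
  have sC' : s `<=` C by move=> x sx; apply: contrapT => Cx; apply: no_sY; exists x.
  by left; left; apply: (VR_eq_on Vs) => // x y /sC' Cx /sC' Cy; rewrite dtheta_CC.
- have [_ _ sC _] := VCs.
  by apply: (VR_eq_on VCs) => // x y /sC Cx /sC Cy; rewrite dtheta_CC.
- have [_ _ sY _] := VYs.
  by apply: (VR_eq_on VYs) => // x y /sY Cx /sY Cy; rewrite dtheta_NN.
Qed.

Hypotheses (beta_metric : metric_on C beta) (dreg_metric : metric_on (Yset C) dreg)
  (C_theta : C theta) (p_ge1 : (1%:E <= p)%E).

Lemma beta_theta_ge0 x : C x -> 0 <= beta x theta.
Proof. by case: beta_metric => ge0 _ _ _ Cx; apply: ge0. Qed.

Lemma dreg_star_ge0 y : ~ C y -> 0 <= dreg (Some y) None.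
Proof. by case: dreg_metric => ge0 _ _ _ Cy; apply: ge0. Qed.

Lemma mixed_simplex_in_join t s : mixed_simplices t s ->
  exists u v, [/\ 0 <= u, 0 <= v, lp_norm p u v <= t &
    join (VR t (Cle C beta theta u) beta) (VR t (Yle C dreg v) (dYo dreg)) s].
Proof.
move=> [Vs [sC sY]]; have [fs _ _ ds] := Vs.
have [x0 [sx0 Cx0] x0_max] :=
  finite_set_argmax (fun x => beta x theta) (finite_setIl C fs) sC.
have [y0 [sy0 Cy0] y0_max] :=
  finite_set_argmax (fun y => dreg (Some y) None) (finite_setIl (~` C) fs) sY.
exists (beta x0 theta), (dreg (Some y0) None); split.
- exact: beta_theta_ge0.
- exact: dreg_star_ge0.
- by rewrite -dtheta_CN //; apply: ds.
exists (s `&` C), (s `&` ~` C); split => //.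
- apply: (VR_eq_on (VR_face Vs (@subIsetl _ s C) sC)).
    by move=> x [sx Cx]; split => //; apply: x0_max.
  by move=> x y [_ Cx] [_ Cy]; rewrite dtheta_CC.
- apply: (VR_eq_on (VR_face Vs (@subIsetl _ s (~` C)) sY)).
    by move=> y [sy Cy]; split => //; apply: y0_max.
  by move=> x y [_ Cx] [_ Cy]; rewrite dtheta_NN.
- by rewrite -setIUr setUCr setIT.
Qed.

Lemma join_in_VR_dtheta t u v a b : 0 <= u -> 0 <= v -> lp_norm p u v <= t ->
  VR t (Cle C beta theta u) beta a -> VR t (Yle C dreg v) (dYo dreg) b ->
  VR t setT dth (a `|` b).
Proof.
move=> u0 v0 uvt Va Vb; have [_ _ aC _] := Va; have [_ _ bY _] := Vb.
apply: VR_setU.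
- by apply: (VR_eq_on Va) => // x y /aC[Cx _] /aC[Cy _]; rewrite dtheta_CC.
- by apply: (VR_eq_on Vb) => // x y /bY[Cx _] /bY[Cy _]; rewrite dtheta_NN.
- move=> x y /aC[Cx xu] /bY[Cy yv]; rewrite dtheta_CN // dtheta_NC //.
  suff cross : lp_norm p (beta x theta) (dreg (Some y) None) <= t by [].
  apply: le_trans uvt; apply: ler_lp_norm => //.
    exact: beta_theta_ge0.
  exact: dreg_star_ge0.
Qed.

Lemma mixed_simplicesE t : mixed_simplices t
  = \bigcup_(uv in [set uv : R * R | [/\ 0 <= uv.1, 0 <= uv.2 &
                                         lp_norm p uv.1 uv.2 <= t]])
      join (VR t (Cle C beta theta uv.1) beta) (VR t (Yle C dreg uv.2) (dYo dreg)).
Proof.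
apply/seteqP; split=> s.
  by move=> /mixed_simplex_in_join[u [v [u0 v0 uvt Js]]]; exists (u, v).
move=> [[u v] [/= u0 v0 uvt]] [a [b [Va Vb [x ax] [y b_y] ->]]].
split; first exact: join_in_VR_dtheta Va Vb.
have [_ _ aC _] := Va; have [_ _ bY _] := Vb.
split; first by exists x; split; [left|exact: (aC x ax).1].
by exists y; split; [right|exact: (bY y b_y).1].
Qed.

Lemma mixed_simplices_pinftyE t : p = +oo%E -> 0 <= t ->
  mixed_simplices t
  = join (VR t (Cle C beta theta t) beta) (VR t (Yle C dreg t) (dYo dreg)).
Proof.
move=> p_oo t0; rewrite mixed_simplicesE p_oo.
apply: (bigcup_join_max_norm (K := fun u => VR t (Cle C beta theta u) beta)
                             (L := fun v => VR t (Yle C dreg v) (dYo dreg)) t0).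
- by move=> u u' uu'; apply/VRS/Cle_subset.
- by move=> v v' vv'; apply/VRS/Yle_subset.
Qed.

End BuresKuratowski.

Theorem theorem6p5 (R : realType) (X : Type) (C : set X)
  (beta : X -> X -> R) (dreg : option X -> option X -> R)
  (theta : X) (p : \bar R) :
  metric_on C beta -> metric_on (Yset C) dreg -> C theta ->
  (1%:E <= p)%E ->
  forall t : R, 0 <= t ->
  ([set s | VR t setT (dtheta C beta dreg theta p) s /\
            (s `&` C !=set0) /\ (s `&` ~` C !=set0)]
   = \bigcup_(uv in [set uv : R * R | [/\ 0 <= uv.1, 0 <= uv.2 &
                                          lp_norm p uv.1 uv.2 <= t]])
       join (VR t (Cle C beta theta uv.1) beta)
            (VR t (Yle C dreg uv.2) (dYo dreg)))
  /\
  (p = +oo%E ->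
   VR t setT (dtheta C beta dreg theta p)
   = VR t C beta `|` VR t (~` C) (dYo dreg)
     `|` join (VR t (Cle C beta theta t) beta) (VR t (Yle C dreg t) (dYo dreg))).
Proof.
move=> beta_metric dreg_metric C_theta p_ge1 t t0; split.
  exact: mixed_simplicesE.
by move=> p_oo; rewrite VR_dthetaE mixed_simplices_pinftyE.
Qed.
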